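(* Let $0=t_0<t_1<t_2<\cdots$ and consider random variables $A\in\{a,a^*\}$, $A^D$, $A^M$, finite-valued mediators $M_0,M_1,\dots$, finite-valued covariates $C_0,C_1,\dots$ and a survival time $T$ with $P(T>0)=1$. For $j,j'\in\{a,a^*\}$ let $P_{j,j'}$ denote the interventional distribution under $do(A^D=j,A^M=j')$ and $P_{do(A=j)}$ that under $do(A=j)$, and let $P$ be the observational distribution. Assume all conditional probabilities below are well defined, and: (P1) $P_{j,j}=P_{do(A=j)}$ for $j\in\{a,a^*\}$; (A0) $A$ is randomised, i.e. $P_{do(A=j)}(E)=P(E\mid A=j)$ for every event $E$ in the variables $T,M_i,C_i$; (A1) for every $i\ge0$, $P_{a,a^*}(M_i=m_i\mid T>t_i,\overline M_{i-1}=\overline m_{i-1},\overline C_{i-1}=\overline c_{i-1})=P_{a^*,a^*}(M_i=m_i\mid T>t_i,\overline M_{i-1}=\overline m_{i-1},\overline C_{i-1}=\overline c_{i-1})$; (A2) for every $i\ge0$ and $t_i<s\le t_{i+1}$, $P_{a,a^*}(T>s\mid T>t_i,\overline M_{i}=\overline m_{i},\overline C_{i}=\overline c_{i})=P_{a,a}(T>s\mid T>t_i,\overline M_{i}=\overline m_{i},\overline C_{i}=\overline c_{i})$; (A3) for every $i\ge0$, $P_{a,a^*}(C_i=c_i\mid T>t_i,\overline M_{i}=\overline m_{i},\overline C_{i-1}=\overline c_{i-1})=P_{a,a}(C_i=c_i\mid T>t_i,\overline M_{i}=\overline m_{i},\overline C_{i-1}=\overline c_{i-1})$. Then for $t_k<t\le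 t_{k+1}$, $$P_{a,a^*}(T>t)=\sum_{\overline m_k,\overline c_k} P(T>t\mid T>t_k,\overline M_k=\overline m_k,\overline C_k=\overline c_k,A=a)\prod_{i=1}^{k}P(T>t_i\mid T>t_{i-1},\overline M_{i-1}=\overline m_{i-1},\overline C_{i-1}=\overline c_{i-1},A=a)$$ $$\times\prod_{i=0}^{k}P(M_i=m_i\mid T>t_i,\overline M_{i-1}=\overline m_{i-1},\overline C_{i-1}=\overline c_{i-1},A=a^* )\,P(C_i=c_i\mid T>t_i,\overline M_{i}=\overline m_{i},\overline C_{i-1}=\overline c_{i-1},A=a).$$ In particular, with $a^*=a$ this gives the g-computation formula for $P_{do(A=a)}(T>t)$.
   Context: $\overline M_i=(M_0,\dots,M_i)$ and $\overline C_i=(C_0,\dots,C_i)$; index $-1$ denotes the empty vector, so that for $i=0$ conditioning on $\overline M_{-1},\overline C_{-1}$ is vacuous. The sum runs over all value vectors $\overline m_k=(m_0,\dots,m_k)$, $\overline c_k=(c_0,\dots,c_k)$. The temporal order of realisation is $A, M_0, C_0, \{T>t_1\}, M_1, C_1, \{T>t_2\},\dots$ (with $M_i,C_i$ taking a symbolic value ''not available'' when $T\le t_i$). *)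

From HB Require Import structures.
From mathcomp Require Import all_boot all_order all_algebra.
From mathcomp Require Import all_classical all_reals all_analysis.
Set Implicit Arguments.
Unset Strict Implicit.
Unset Printing Implicit Defensive.
Import Order.TTheory GRing.Theory Num.Theory.
Local Open Scope classical_set_scope.
Local Open Scope ring_scope.

(* Elementary conditional probability mu(E | F) = mu(E & F) / mu(F),
   real-valued; by MathComp's convention x / 0 = 0 it is 0 when mu F = 0. *)
Definition condP {d : measure_display} {Omega : measurableType d} {R : realType}
  (mu : probability Omega R) (E F : set Omega) : R :=
  fine (mu (E `&` F)) / fine (mu F).

Definition Tgt {Omega : Type} {R : realType} (T : Omega -> R) (s : R) : set Omega :=
  [set w | s < T w].

Definition ev1 {Omega : Type} (V : nat -> Type) (X : forall i : nat, Omega -> V i)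
  (K : nat) (v : forall j : 'I_K, V j) (j : 'I_K) : set Omega :=
  [set w | X j w = v j].

(* event {X_j = v_j for all j < n}, i.e. \overline X_{n-1} = \overline v_{n-1}
   (the empty event-condition, i.e. the whole space, when n = 0) *)
Definition evbar {Omega : Type} (V : nat -> Type) (X : forall i : nat, Omega -> V i)
  (K : nat) (v : forall j : 'I_K, V j) (n : nat) : set Omega :=
  [set w | forall j : 'I_K, (j < n)%N -> X j w = v j].

(* Events "in the variables T, M_i, C_i": generators of the sigma-algebra *)
Definition genTMC {Omega : Type} {R : realType} (T : Omega -> R)
  (MT CT : nat -> Type) (M : forall i, Omega -> MT i) (C : forall i, Omega -> CT i)
  : set (set Omega) :=
  [set E | (exists B : set R, measurable B /\ E = T @^-1` B)
        \/ (exists i (x : MT i), E = M i @^-1` [set x])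
        \/ (exists i (x : CT i), E = C i @^-1` [set x])].

(* Factor the joint law of the survival time and of the mediator and covariate
   paths (m_0..m_k, c_0..c_k) under do(A^D = a, A^M = a^* ) by the chain rule
   into the successive conditionals in the temporal order A, M_0, C_0,
   {T > t_1}, M_1, ...  Assumptions (A1)-(A3) replace each mediator factor by
   its value under do(A = a^* ) and each survival and covariate factor by its
   value under do(A = a); (P1) and randomisation (A0) then turn each of these
   into an observational conditional probability given A.  Summing over all
   paths gives the formula. *)
From HB Require Import structures.
From mathcomp Require Import all_boot all_order all_algebra.
From mathcomp Require Import all_classical all_reals all_analysis.
From mathcomp Require Import ring.
Set Implicit Arguments.
Unset Strict Implicit.
Unset Printing Implicit Defensive.
Import Order.TTheory GRing.Theory Num.Theory.
Local Open Scope classical_set_scope.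
Local Open Scope ring_scope.

Section ConditionalProbability.
Context {d : measure_display} {Omega : measurableType d} {R : realType}.
Implicit Types (mu nu : probability Omega R) (E F : set Omega).

Lemma eq_condP mu nu : mu =1 nu -> forall E F, condP mu E F = condP nu E F.
Proof. by move=> eq_mu E F; rewrite /condP !eq_mu. Qed.

(* Holds also when [mu F = 0], despite [x / 0 = 0]: then [mu (E `&` F) = 0]. *)
Lemma fine_measureI_condP mu E F : measurable E -> measurable F ->
  fine (mu (E `&` F)) = condP mu E F * fine (mu F).
Proof.
move=> mE mF; rewrite /condP.
have [muF0|/mulfVK-> //] := eqVneq (fine (mu F)) 0.
have {}muF0 : mu F = 0%E by rewrite -[mu F]fineK ?fin_num_measure ?muF0.
have : (mu (E `&` F) <= mu F)%E by apply: le_measure; rewrite ?inE //; exact: measurableI.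
rewrite muF0 mulr0 => muEF_le0.
suff -> : mu (E `&` F) = 0%E by [].
by apply/eqP; rewrite eq_le muEF_le0 measure_ge0.
Qed.

Lemma fine_measure_partition_seq mu (X : eqType) (f : Omega -> X) E (s : seq X) :
  measurable E -> (forall x, measurable (f @^-1` [set x])) -> uniq s ->
  measurable (E `&` [set w | f w \in s]) /\
  fine (mu (E `&` [set w | f w \in s])) =
    \sum_(x <- s) fine (mu (E `&` [set w | f w = x])).
Proof.
move=> mE mf; elim: s => [|x s IH] /=.
  have -> : E `&` [set w | f w \in [::]] = set0 by apply/seteqP; split=> w // [].
  by rewrite big_nil measure0.
case/andP=> x_notin_s /IH[ms IHs].
have -> : E `&` [set w | f w \in x :: s] =
    (E `&` [set w | f w = x]) `|` (E `&` [set w | f w \in s]).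
  apply/seteqP; split=> w /=.
    by case=> Ew; rewrite in_cons => /orP[/eqP|]; [left|right].
  by case=> -[Ew fw]; split; rewrite // in_cons ?fw ?eqxx ?orbT.
have mx : measurable (E `&` [set w | f w = x]) by apply: measurableI; [|exact: mf].
split; first exact: measurableU.
rewrite measureU // ?fineD ?fin_num_measure ?big_cons ?IHs //.
by apply/seteqP; split=> w // [[_ /= ->]] [_]; rewrite (negbTE x_notin_s).
Qed.

Lemma fine_measure_partition mu (X : finType) (f : Omega -> X) E :
  measurable E -> (forall x, measurable (f @^-1` [set x])) ->
  fine (mu E) = \sum_(x : X) fine (mu (E `&` [set w | f w = x])).
Proof.
move=> mE mf; have [_] := fine_measure_partition_seq mu mE mf (enum_uniq X).
have -> : E `&` [set w | f w \in enum X] = E.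
  by apply/seteqP; split=> w /=; [case | split; rewrite ?mem_enum].
by rewrite big_enum.
Qed.

Lemma condP_conditioned mu nu (S : set (set Omega)) (Aj : set Omega) :
  S setT -> (forall X, S X -> fine (nu X) = condP mu X Aj) ->
  forall E F, S (E `&` F) -> S F -> condP nu E F = condP mu E (F `&` Aj).
Proof.
move=> ST nuE E F SEF SF.
have muAj_neq0 : fine (mu Aj) != 0.
  apply/eqP=> muAj0; have := nuE _ ST.
  by rewrite probability_setT /condP muAj0 invr0 mulr0 => /eqP; rewrite oner_eq0.
rewrite /condP (nuE _ SEF) (nuE _ SF) /condP setIA.
set y := fine (mu (F `&` Aj)).
have [->|y_neq0] := eqVneq y 0; first by rewrite !mul0r !invr0 !mulr0.
by rewrite invfM invrK [y^-1 * _]mulrC mulrA mulfVK.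
Qed.

End ConditionalProbability.

Lemma Tgt_setIl {Omega : Type} {R : realType} (T : Omega -> R) (s u : R) :
  s <= u -> Tgt T u `&` Tgt T s = Tgt T u.
Proof.
move=> su; apply/seteqP; split=> w /=; first by case.
by move=> uTw; split=> //; exact: le_lt_trans uTw.
Qed.

Lemma measurable_Tgt {d : measure_display} {Omega : measurableType d} {R : realType}
  (T : Omega -> R) (s : R) : measurable_fun setT T -> measurable (Tgt T s).
Proof.
move=> mT; have -> : Tgt T s = setT `&` T @^-1` `]s, +oo[%classic.
  by apply/seteqP; split=> w /=; rewrite in_itv /= andbT; [split | case].
by apply: mT => //; exact: measurable_itv.
Qed.

Section HistoryEvents.
Context {Omega : Type} (V : nat -> Type) (X : forall i : nat, Omega -> V i).

Lemma evbar0 K (v : forall j : 'I_K, V j) : evbar X v 0 = setT.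
Proof. by apply/seteqP; split=> w // _ []. Qed.

Lemma evbarS K (v : forall j : 'I_K, V j) n (ltnK : (n < K)%N) :
  evbar X v n.+1 = evbar X v n `&` ev1 X v (Ordinal ltnK).
Proof.
apply/seteqP; split=> w /=.
  by move=> Xv; split; [move=> j /ltnW; exact: Xv | exact: Xv].
move=> [Xv Xvn] j; rewrite ltnS leq_eqVlt => /orP[/eqP jn|]; last exact: Xv.
by have -> : j = Ordinal ltnK by exact: val_inj.
Qed.

Lemma evbarS_ge K (v : forall j : 'I_K, V j) n :
  (K <= n)%N -> evbar X v n.+1 = evbar X v n.
Proof.
move=> Kn; have jn (j : 'I_K) : (j < n)%N by exact: leq_trans (ltn_ord j) Kn.
apply/seteqP; split=> w Xv j _; apply: Xv; first exact: ltnW (jn j).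
exact: jn.
Qed.

End HistoryEvents.

Lemma measurable_evbar {d : measure_display} {U : measurableType d} (V : nat -> Type)
    (Y : forall i : nat, U -> V i) K (v : forall j : 'I_K, V j) n :
  (forall i (x : V i), measurable (Y i @^-1` [set x])) -> measurable (evbar Y v n).
Proof.
move=> mY; elim: n => [|n IHn]; first by rewrite evbar0.
have [ltnK|Kn] := ltnP n K; last by rewrite evbarS_ge.
by rewrite (evbarS Y v ltnK); apply: measurableI => //; exact: mY.
Qed.

Lemma big_ord_cond_ltnS (R : Type) (idx : R) (op : Monoid.com_law idx)
    K n (ltnK : (n < K)%N) (P : pred 'I_K) (F : 'I_K -> R) :
  \big[op/idx]_(i < K | P i && (i < n.+1)%N) F i =
  op (if P (Ordinal ltnK) then F (Ordinal ltnK) else idx)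
     (\big[op/idx]_(i < K | P i && (i < n)%N) F i).
Proof.
rewrite big_mkcondl [in RHS]big_mkcondl (bigD1 (Ordinal ltnK)) //=.
congr (op _ _); apply: eq_bigl => i /=.
have -> : (i != Ordinal ltnK) = (nat_of_ord i != n).
  by apply/idP/idP; apply: contra => /eqP ein; apply/eqP; [exact: val_inj | rewrite ein].
by rewrite ltnS leq_eqVlt; case: ltngtP.
Qed.

Lemma big_ord_ltnS (R : Type) (idx : R) (op : Monoid.com_law idx)
    K n (ltnK : (n < K)%N) (F : 'I_K -> R) :
  \big[op/idx]_(i < K | (i < n.+1)%N) F i =
  op (F (Ordinal ltnK)) (\big[op/idx]_(i < K | (i < n)%N) F i).
Proof. exact: (big_ord_cond_ltnS op ltnK predT). Qed.

Definition dffun_prefix (V : nat -> finType) K n (nK : (n <= K)%N)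
    (v : {dffun forall j : 'I_K, V j}) : {dffun forall j : 'I_n, V j} :=
  [ffun j : 'I_n => (v (widen_ord nK j) : V j)].

Section Prefix.
Context {Omega : Type} (V : nat -> finType) (X : forall i : nat, Omega -> V i).
Context (K n : nat) (nK : (n <= K)%N) (v : {dffun forall j : 'I_K, V j}).

Lemma dffun_prefixE (j : 'I_n) (i : 'I_K) w : nat_of_ord j = nat_of_ord i ->
  (X j w = dffun_prefix nK v j) <-> (X i w = v i).
Proof.
case: j i => j ltjn [i ltiK] /= eji; subst i.
by rewrite ffunE /widen_ord /= (bool_irrelevance (widen_ord_proof (Ordinal ltjn) nK) ltiK).
Qed.

Lemma evbar_prefix p : (p <= n)%N -> evbar X (dffun_prefix nK v) p = evbar X v p.
Proof.
move=> pn; apply/seteqP; split=> w /= Xv j jp.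
  have ltjn : (j < n)%N by exact: leq_trans jp pn.
  by apply/(@dffun_prefixE (Ordinal ltjn)); last exact: Xv.
by apply/(@dffun_prefixE j (widen_ord nK j)) => //; exact: Xv.
Qed.

End Prefix.

Lemma ev1_prefix {Omega : Type} (V : nat -> finType) (X : forall i : nat, Omega -> V i)
    K (i : 'I_K) (v : {dffun forall j : 'I_K, V j}) :
  ev1 X (dffun_prefix (ltn_ord i) v) ord_max = ev1 X v i.
Proof. by apply/seteqP; split=> w /dffun_prefixE; apply. Qed.

Section SurvivalChainRule.
Context {d : measure_display} {Omega : measurableType d} {R : realType}.
Variables (tt : nat -> R) (MT CT : nat -> finType) (T : Omega -> R).
Variables (M : forall i : nat, Omega -> MT i) (C : forall i : nat, Omega -> CT i).
Hypothesis tt0 : tt 0%N = 0.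
Hypothesis tt_incr : forall i, tt i < tt i.+1.
Hypothesis mT : measurable_fun setT T.
Hypothesis mM : forall i (x : MT i), measurable (M i @^-1` [set x]).
Hypothesis mC : forall i (x : CT i), measurable (C i @^-1` [set x]).
Variable mu : probability Omega R.
Hypothesis mu_T0 : mu (Tgt T 0) = 1%E.
Variables (K : nat) (m : {dffun forall j : 'I_K, MT j}) (c : {dffun forall j : 'I_K, CT j}).

Definition history n := Tgt T (tt n.-1) `&` evbar M m n `&` evbar C c n.
Definition at_risk n := Tgt T (tt n) `&` evbar M m n `&` evbar C c n.

Let mTgt s : measurable (Tgt T s). Proof. exact: measurable_Tgt. Qed.
Let mevM n : measurable (evbar M m n). Proof. exact: measurable_evbar. Qed.
Let mevC n : measurable (evbar C c n). Proof. exact: measurable_evbar. Qed.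
Let mhist u n n' : measurable (Tgt T u `&` evbar M m n `&` evbar C c n').
Proof. by apply: measurableI; [exact: measurableI|]. Qed.

Lemma fine_measure_history_succ n (ltnK : (n < K)%N) :
  fine (mu (history n.+1)) =
  condP mu (ev1 C c (Ordinal ltnK)) (Tgt T (tt n) `&` evbar M m n.+1 `&` evbar C c n)
  * condP mu (ev1 M m (Ordinal ltnK)) (at_risk n) * fine (mu (at_risk n)).
Proof.
have -> : history n.+1 = ev1 C c (Ordinal ltnK) `&`
    (Tgt T (tt n) `&` evbar M m n.+1 `&` evbar C c n).
  by rewrite /history /= (evbarS C c ltnK) setIA setIC.
rewrite fine_measureI_condP //; last exact: mC.
have -> : Tgt T (tt n) `&` evbar M m n.+1 `&` evbar C c n =
    ev1 M m (Ordinal ltnK) `&` at_risk n.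
  rewrite /at_risk (evbarS M m ltnK); apply/seteqP; split=> w /=.
    by case=> -[? [? ?]] ?.
  by case=> ? [[? ?] ?].
by rewrite fine_measureI_condP ?mulrA //; [exact: mM | exact: mhist].
Qed.

Lemma fine_measure_at_risk n :
  fine (mu (at_risk n)) =
  (if (0 < n)%N then condP mu (Tgt T (tt n)) (history n) else 1) * fine (mu (history n)).
Proof.
case: n => [|n] /=; first by rewrite mul1r.
have -> : at_risk n.+1 = Tgt T (tt n.+1) `&` history n.+1.
  by rewrite /at_risk /history !setIA Tgt_setIl // ltW.
by apply: fine_measureI_condP; [exact: mTgt | exact: mhist].
Qed.

Lemma fine_measure_history n : (n <= K)%N ->
  fine (mu (history n)) =
  (\prod_(i < K | (0 < i)%N && (i < n)%N) condP mu (Tgt T (tt i)) (history i))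
  * \prod_(i < K | (i < n)%N)
      (condP mu (ev1 M m i) (at_risk i)
       * condP mu (ev1 C c i) (Tgt T (tt i) `&` evbar M m i.+1 `&` evbar C c i)).
Proof.
elim: n => [_|n IHn ltnK].
  have -> : history 0 = Tgt T 0 by rewrite /history tt0 !evbar0 !setIT.
  by rewrite mu_T0 !big_pred0 ?mulr1 // => i; rewrite ltn0 andbF.
rewrite fine_measure_history_succ fine_measure_at_risk IHn; last exact: ltnW.
rewrite (big_ord_cond_ltnS _ ltnK) (big_ord_ltnS _ ltnK) /=.
by ring.
Qed.

Lemma fine_measure_history_full :
  fine (mu (history K)) =
  (\prod_(i < K | (0 < i)%N) condP mu (Tgt T (tt i)) (history i))
  * \prod_(i < K)
      (condP mu (ev1 M m i) (at_risk i)
       * condP mu (ev1 C c i) (Tgt T (tt i) `&` evbar M m i.+1 `&` evbar C c i)).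
Proof.
rewrite fine_measure_history //; congr (_ * _); apply: eq_bigl => i.
  by rewrite ltn_ord andbT.
exact: ltn_ord.
Qed.

End SurvivalChainRule.

Section Identification.
Context {d : measure_display} {Omega : measurableType d} {R : realType}.
Variables (MT CT : nat -> finType) (T : Omega -> R).
Variables (M : forall i : nat, Omega -> MT i) (C : forall i : nat, Omega -> CT i).

Lemma fine_measure_sum_evbar (mu : probability Omega R) (E : set Omega) K :
  measurable E ->
  (forall i (x : MT i), measurable (M i @^-1` [set x])) ->
  (forall i (x : CT i), measurable (C i @^-1` [set x])) ->
  fine (mu E) =
  \sum_(m : {dffun forall j : 'I_K, MT j}) \sum_(c : {dffun forall j : 'I_K, CT j})
    fine (mu (E `&` evbar M m K `&` evbar C c K)).
Proof.
move=> mE mM mC.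
pose path_of (V : nat -> finType) (X : forall i : nat, Omega -> V i) w
  : {dffun forall j : 'I_K, V j} := [ffun j : 'I_K => (X j w : V j)].
have path_ofE (V : nat -> finType) (X : forall i : nat, Omega -> V i)
    (v : {dffun forall j : 'I_K, V j}) :
    [set w | path_of V X w = v] = evbar X v K.
  apply/seteqP; split=> w /=; first by move=> <- j _; rewrite ffunE.
  by move=> Xv; apply/ffunP => j; rewrite ffunE; exact: Xv.
rewrite (fine_measure_partition mu (f := path_of _ M) mE); last first.
  by move=> v; rewrite [_ @^-1` _]path_ofE; exact: measurable_evbar.
apply: eq_bigr => m _; rewrite path_ofE.
rewrite (fine_measure_partition mu (f := path_of _ C)); last 2 first.
- by apply: measurableI => //; exact: measurable_evbar.
- by move=> v; rewrite [_ @^-1` _]path_ofE; exact: measurable_evbar.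
by apply: eq_bigr => c _; rewrite path_ofE.
Qed.

Let S := <<s genTMC T M C >>.
Local Notation G := (g_sigma_algebraType (genTMC T M C)).

Lemma genTMC_Tgt s : S (Tgt T s).
Proof.
apply: sub_sigma_algebra; left; exists `]s, +oo[%classic; split; first exact: measurable_itv.
by apply/seteqP; split=> w /=; rewrite in_itv /= andbT.
Qed.

Lemma genTMC_M i (x : MT i) : S (M i @^-1` [set x]).
Proof. by apply: sub_sigma_algebra; right; left; exists i, x. Qed.

Lemma genTMC_C i (x : CT i) : S (C i @^-1` [set x]).
Proof. by apply: sub_sigma_algebra; right; right; exists i, x. Qed.

(* [S] is the class of measurable sets of [G], so the closure lemmas for
   measurable sets apply to it. *)
Lemma genTMC_history u K (m : forall j : 'I_K, MT j) (c : forall j : 'I_K, CT j) n n' :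
  S (Tgt T u `&` evbar M m n `&` evbar C c n').
Proof.
apply: (@measurableI _ G).
  apply: (@measurableI _ G); first exact: genTMC_Tgt.
  by apply: (@measurable_evbar _ G); exact: genTMC_M.
by apply: (@measurable_evbar _ G); exact: genTMC_C.
Qed.

Lemma condP_randomized (mu nu : probability Omega R) (Aj : set Omega) :
  (forall E, S E -> fine (nu E) = condP mu E Aj) ->
  forall E u K (m : forall j : 'I_K, MT j) (c : forall j : 'I_K, CT j) n n', S E ->
  condP nu E (Tgt T u `&` evbar M m n `&` evbar C c n') =
  condP mu E (Tgt T u `&` evbar M m n `&` evbar C c n' `&` Aj).
Proof.
move=> nuE E u K m c n n' SE; apply: (condP_conditioned (S := S)) => //.
- exact: (@measurableT _ G).
- apply: (@measurableI _ G) => //.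
  exact: genTMC_history.
- exact: genTMC_history.
Qed.

End Identification.

Theorem mainTheorem7
  (d : measure_display) (Omega : measurableType d) (R : realType)
  (tt : nat -> R)
  (AT : Type) (a astar : AT)
  (MT CT : nat -> finType)
  (A : Omega -> AT) (T : Omega -> R)
  (M : forall i : nat, Omega -> MT i) (C : forall i : nat, Omega -> CT i)
  (P : probability Omega R)
  (Pint : AT -> AT -> probability Omega R)
  (Pdo : AT -> probability Omega R)
  (* time grid 0 = t_0 < t_1 < t_2 < ... *)
  (ht0 : tt 0%N = 0)
  (htinc : forall i : nat, tt i < tt i.+1)
  (* measurability of the variables *)
  (hAm : forall x : AT, measurable (A @^-1` [set x]))
  (hTm : measurable_fun setT T)
  (hMm : forall i (x : MT i), measurable (M i @^-1` [set x]))
  (hCm : forall i (x : CT i), measurable (C i @^-1` [set x]))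
  (* A takes values in {a, a^*} *)
  (hA : forall w, A w = a \/ A w = astar)
  (* P(T > 0) = 1 (under every distribution considered) *)
  (hT0 : P (Tgt T 0) = 1%E)
  (hT0int : forall j j', (j = a \/ j = astar) -> (j' = a \/ j' = astar) ->
            Pint j j' (Tgt T 0) = 1%E)
  (hT0do : forall j, (j = a \/ j = astar) -> Pdo j (Tgt T 0) = 1%E)
  (* (P1) *)
  (hP1 : forall j, (j = a \/ j = astar) -> forall E, Pint j j E = Pdo j E)
  (* (A0) randomisation of A *)
  (hA0 : forall j, (j = a \/ j = astar) ->
         forall E, <<s genTMC T M C >> E ->
         fine (Pdo j E) = condP P E [set w | A w = j])
  (* (A1) *)
  (hA1 : forall (i : nat) (m : {dffun forall j : 'I_i.+1, MT j})
           (c : {dffun forall j : 'I_i.+1, CT j}),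
     condP (Pint a astar) (ev1 M m ord_max)
       (Tgt T (tt i) `&` evbar M m i `&` evbar C c i)
     = condP (Pint astar astar) (ev1 M m ord_max)
       (Tgt T (tt i) `&` evbar M m i `&` evbar C c i))
  (* (A2) *)
  (hA2 : forall (i : nat) (m : {dffun forall j : 'I_i.+1, MT j})
           (c : {dffun forall j : 'I_i.+1, CT j}) (s : R),
     tt i < s -> s <= tt i.+1 ->
     condP (Pint a astar) (Tgt T s)
       (Tgt T (tt i) `&` evbar M m i.+1 `&` evbar C c i.+1)
     = condP (Pint a a) (Tgt T s)
       (Tgt T (tt i) `&` evbar M m i.+1 `&` evbar C c i.+1))
  (* (A3) *)
  (hA3 : forall (i : nat) (m : {dffun forall j : 'I_i.+1, MT j})
           (c : {dffun forall j : 'I_i.+1, CT j}),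
     condP (Pint a astar) (ev1 C c ord_max)
       (Tgt T (tt i) `&` evbar M m i.+1 `&` evbar C c i)
     = condP (Pint a a) (ev1 C c ord_max)
       (Tgt T (tt i) `&` evbar M m i.+1 `&` evbar C c i))
  (k : nat) (t : R) (htk : tt k < t) (htk1 : t <= tt k.+1) :
  fine (Pint a astar (Tgt T t)) =
  \sum_(m : {dffun forall j : 'I_k.+1, MT j})
  \sum_(c : {dffun forall j : 'I_k.+1, CT j})
    condP P (Tgt T t)
      (Tgt T (tt k) `&` evbar M m k.+1 `&` evbar C c k.+1 `&` [set w | A w = a])
    * (\prod_(i < k.+1 | (0 < i)%N)
        condP P (Tgt T (tt i))
          (Tgt T (tt i.-1) `&` evbar M m i `&` evbar C c i `&` [set w | A w = a]))
    * (\prod_(i < k.+1)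
        (condP P (ev1 M m i)
           (Tgt T (tt i) `&` evbar M m i `&` evbar C c i `&` [set w | A w = astar])
         * condP P (ev1 C c i)
           (Tgt T (tt i) `&` evbar M m i.+1 `&` evbar C c i `&` [set w | A w = a]))).
Proof.
have ha : a = a \/ a = astar by left.
have has : astar = a \/ astar = astar by right.
have identify j E u K (m : forall i : 'I_K, MT i) (c : forall i : 'I_K, CT i) n n' :
    j = a \/ j = astar -> <<s genTMC T M C >> E ->
    condP (Pint j j) E (Tgt T u `&` evbar M m n `&` evbar C c n') =
    condP P E (Tgt T u `&` evbar M m n `&` evbar C c n' `&` [set w | A w = j]).
  by move=> hj SE; rewrite (eq_condP (hP1 j hj)) (condP_randomized (hA0 j hj)).
pose Q := Pint a astar.
rewrite (fine_measure_sum_evbar Q k.+1 (measurable_Tgt t hTm) hMm hCm).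
apply: eq_bigr => m _; apply: eq_bigr => c _.
have -> : Tgt T t `&` evbar M m k.+1 `&` evbar C c k.+1 =
    Tgt T t `&` history tt T M C m c k.+1.
  by rewrite /history !setIA Tgt_setIl // ltW.
rewrite fine_measureI_condP; last 2 first.
- exact: measurable_Tgt.
- by apply: measurableI; [apply: measurableI; [exact: measurable_Tgt|]|]; exact: measurable_evbar.
rewrite (fine_measure_history_full ht0 htinc hTm hMm hCm (hT0int _ _ ha has)) mulrA.
congr (_ * _ * _).
- by rewrite (hA2 k m c t htk htk1) identify //; exact: genTMC_Tgt.
- apply: eq_bigr => -[[|j] ltjk] // _.
  have := hA2 j (dffun_prefix (ltnW ltjk) m) (dffun_prefix (ltnW ltjk) c)
    (tt j.+1) (htinc j) (lexx _).
  rewrite !evbar_prefix // => hA2j.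
  by rewrite hA2j identify //; exact: genTMC_Tgt.
- apply: eq_bigr => i _; congr (_ * _).
  + have := hA1 i (dffun_prefix (ltn_ord i) m) (dffun_prefix (ltn_ord i) c).
    rewrite ev1_prefix !evbar_prefix // => hA1i.
    by rewrite hA1i identify //; exact: genTMC_M.
  + have := hA3 i (dffun_prefix (ltn_ord i) m) (dffun_prefix (ltn_ord i) c).
    rewrite ev1_prefix !evbar_prefix // => hA3i.
    by rewrite hA3i identify //; exact: genTMC_C.
Qed.
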